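(* The family of partial orders $\mathfrak{P}=\{\tilde{\mathcal{P}}_i:i\in\mathbb{N}\}$ is both $E_0$-learnable and $E_{range}$-learnable, but it is not $\mathbf{nUs}$-learnable.
   Context: Partial orders are structures in the language $\{\leq\}$. For $k>0$, $\mathcal{P}_k$ is the partial order on $\{0,\dots,2k+1\}$ that is the reflexive transitive closure of the relations $2i\leq 2i+2$ for $i<k$ and $2i\leq 2i+1$ for $i\leq k$. $\mathcal{P}_0$ is the partial order on $\mathbb{N}$ that is the reflexive transitive closure of $2i\leq 2i+2$ for all $i$ and $2j\leq 2j-1$ for all $j>0$. For a partial order $L$, $\tilde{L}$ is $L$ together with infinitely many new elements that are pairwise incomparable and incomparable to the elements of $L$ (presented with domain $\mathbb{N}$). All structures are countable, have domain $\mathbb{N}$, and are identified with their atomic diagrams (elements of $2^{\mathbb{N}}$). A family of structures $\mathfrak{K}$ is a countable set of pairwise nonisomorphic such structures; $\mathcal{S}\restriction_s$ is the finite substructure on $\{0,\dots,s\}$; $\mathrm{LD}(\mathfrak{K})\subseteq2^{\mathbb{N}}$ is the set of structures with domain $\mathbb{N}$ isomorphic to a member of $\mathfrak{K}$ (subspace topology). For an equivalence relation $E$ on a space $X$, $\mathfrak{K}$ is $E$-learnable if there is a continuous $\Gamma:\mathrm{LD}(\mathfrak{K})\to X$ with $\mathcal{S}\cong\mathcal{S}'\iff\Gamma(\mathcal{S})E\Gamma(\mathcal{S}')$ on $\mathrm{LD}(\mathfrak{K})$. On $\mathbb{N}^{\mathbb{N}}$: $p\,E_0\,q\iff\exists m\forall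 n\ge m\ p(n)=q(n)$; $p\,E_{range}\,q\iff\{p(m):m\}=\{q(m):m\}$. A learner is an arbitrary function from $\{\mathcal{S}\restriction_s:\mathcal{S}\in\mathrm{LD}(\mathfrak{K})\}$ to $\{\ulcorner\mathcal{A}\urcorner:\mathcal{A}\in\mathfrak{K}\}\cup\{?\}$. $\mathfrak{K}$ is $\mathbf{nUs}$-learnable if some learner $\mathbf{M}$ satisfies: for every $\mathcal{S}\in\mathrm{LD}(\mathfrak{K})$ with $\mathcal{S}\cong\mathcal{A}\in\mathfrak{K}$, $\mathbf{M}(\mathcal{S}\restriction_n)$ is eventually constantly $\ulcorner\mathcal{A}\urcorner$, and once $\mathbf{M}$ first outputs $\ulcorner\mathcal{A}\urcorner$ on $\mathcal{S}$ it outputs $\ulcorner\mathcal{A}\urcorner$ at all later stages. *)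

From Stdlib Require Import Arith PeanoNat Bool Relations ClassicalEpsilon.
Local Open Scope bool_scope.

(** * Structures in the language {<=} with domain N, identified with their
    atomic diagrams: a binary relation on nat with boolean values
    (the equality atoms of the diagram are fixed and carry no information). *)
Definition structure := nat -> nat -> bool.

Definition pbool (P : Prop) : bool :=
  if excluded_middle_informative P then true else false.

Definition iso (S S' : structure) : Prop :=
  exists (f g : nat -> nat),
    (forall x, g (f x) = x) /\ (forall y, f (g y) = y) /\
    (forall x y, S x y = S' (f x) (f y)).

Definition agree_upto (s : nat) (S S' : structure) : Prop :=
  forall x y, x <= s -> y <= s -> S x y = S' x y.

Definition Pgen (k : nat) (x y : nat) : Prop :=
  if k =? 0 then
    (exists i, x = 2 * i /\ y = 2 * i + 2) \/
    (exists j, 0 < j /\ x = 2 * j /\ y = 2 * j - 1)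
  else
    (exists i, i < k /\ x = 2 * i /\ y = 2 * i + 2) \/
    (exists i, i <= k /\ x = 2 * i /\ y = 2 * i + 1).

Definition Pdom (k : nat) (x : nat) : bool :=
  if k =? 0 then true else x <=? 2 * k + 1.

Definition Ple (k : nat) (x y : nat) : bool :=
  pbool (clos_refl_trans nat (Pgen k) x y).

(** * Tilde: L together with infinitely many new pairwise incomparable elements,
    incomparable to L, presented with domain N:
    element 2n is the element n of L (when n is in the domain of L),
    all other elements are new. *)
Definition tilde (dom : nat -> bool) (le : nat -> nat -> bool) : structure :=
  fun x y =>
    (x =? y) ||
    (Nat.even x && Nat.even y && dom (Nat.div2 x) && dom (Nat.div2 y)
       && le (Nat.div2 x) (Nat.div2 y)).

Definition Pfam (i : nat) : structure := tilde (Pdom i) (Ple i).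

Definition LD (fam : nat -> structure) (S : structure) : Prop :=
  exists i, iso S (fam i).

(** Continuity of Gamma : LD(K) -> N^N, where LD(K) carries the subspace topology
    of Cantor space (basic opens fix finitely many atoms, equivalently fix the
    diagram on some {0..m}) and N^N the product (Baire) topology. *)
Definition continuous_on_LD (fam : nat -> structure)
    (Gamma : structure -> (nat -> nat)) : Prop :=
  forall S, LD fam S -> forall n, exists m, forall S', LD fam S' ->
    agree_upto m S S' -> forall j, j <= n -> Gamma S' j = Gamma S j.

Definition E_learnable (E : (nat -> nat) -> (nat -> nat) -> Prop)
    (fam : nat -> structure) : Prop :=
  exists Gamma : structure -> (nat -> nat),
    continuous_on_LD fam Gamma /\
    forall S S', LD fam S -> LD fam S' -> (iso S S' <-> E (Gamma S) (Gamma S')).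

Definition E0 (p q : nat -> nat) : Prop :=
  exists m, forall n, m <= n -> p n = q n.

Definition Erange (p q : nat -> nat) : Prop :=
  forall a, (exists m, p m = a) <-> (exists m, q m = a).

(** A learner: M s S is the output on the finite substructure S|_s (restriction
    of S to {0,...,s}); it may only depend on that substructure.
    Output Some i = the code of fam i, None = "?". *)
Definition learner := nat -> structure -> option nat.

Definition is_learner (M : learner) : Prop :=
  forall s S S', agree_upto s S S' -> M s S = M s S'.

Definition nUs_learnable (fam : nat -> structure) : Prop :=
  exists M : learner, is_learner M /\
    forall S i, LD fam S -> iso S (fam i) ->
      (exists n0, forall n, n0 <= n -> M n S = Some i) /\
      (forall n, M n S = Some i -> forall m, n <= m -> M m S = Some i).

From Stdlib Require Import Arith Lia List Bool Relations ClassicalEpsilon FinFun.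

(* Copies of tilde P_k are told apart by two statistics of their finite pieces: the number
   of points comparable to some other point of the piece, which tends to 2k + 2 for k > 0
   and to infinity for k = 0, and the presence of a point comparable to exactly one other
   point (the leaf 1 above the root 0), which eventually holds exactly when k > 0.
   Together they give a learner whose values are eventually constant; capping the count so
   that it grows by steps of at most one gives a learner whose range is {0, ..., 2k + 2}
   or N.  On the other hand every finite piece of tilde P_0 extends to a copy of some
   tilde P_k with k > 0 and vice versa, so a learner for the family has to abandon a
   correct conjecture 0 and return to it later. *)

Ltac name_div_mod x c :=
  let Hd := fresh "Hd" in let Hb := fresh "Hb" in
  pose proof (Nat.div_mod_eq x c) as Hd;
  pose proof (Nat.mod_upper_bound x c ltac:(discriminate)) as Hb;
  let r := fresh "r" in let q := fresh "q" in
  set (r := x mod c) in *; set (q := x / c) in *; clearbody r q.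

Ltac mod_lia :=
  repeat match goal with
  | H : context [?x mod ?c] |- _ => name_div_mod x c
  | |- context [?x mod ?c] => name_div_mod x c
  | H : context [?x / ?c] |- _ => name_div_mod x c
  | |- context [?x / ?c] => name_div_mod x c
  end; lia.

Lemma pbool_true_iff (P : Prop) : pbool P = true <-> P.
Proof.
  unfold pbool; destruct (excluded_middle_informative P); split; intuition discriminate.
Qed.

Lemma pbool_ext (P Q : Prop) : (P <-> Q) -> pbool P = pbool Q.
Proof.
  unfold pbool; destruct (excluded_middle_informative P), (excluded_middle_informative Q); tauto.
Qed.

Lemma iso_refl A : iso A A.
Proof. exists (fun x => x), (fun x => x); auto. Qed.

Lemma iso_sym A B : iso A B -> iso B A.
Proof.
  intros (f & g & gf & fg & Hfg); exists g, f; repeat split; auto.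
  intros x y; rewrite Hfg, !fg; reflexivity.
Qed.

Lemma iso_trans A B C : iso A B -> iso B C -> iso A C.
Proof.
  intros (f & g & gf & fg & Hf) (f' & g' & gf' & fg' & Hf').
  exists (fun x => f' (f x)), (fun y => g (g' y)); repeat split.
  - intro x; rewrite gf', gf; reflexivity.
  - intro y; rewrite fg, fg'; reflexivity.
  - intros x y; rewrite Hf, Hf'; reflexivity.
Qed.

Lemma agree_upto_le m n A B : n <= m -> agree_upto m A B -> agree_upto n A B.
Proof. intros Hnm H x y Hx Hy; apply H; lia. Qed.

Definition comparable (A : structure) x y : Prop := A x y = true \/ A y x = true.

Lemma comparable_agree n A B x y : agree_upto n A B -> x <= n -> y <= n ->
  comparable A x y <-> comparable B x y.
Proof. intros H Hx Hy; unfold comparable; rewrite !H by assumption; reflexivity. Qed.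

Lemma comparable_iso (A B : structure) (f : nat -> nat) : (forall x y, A x y = B (f x) (f y)) ->
  forall x y, comparable A x y <-> comparable B (f x) (f y).
Proof. intros Hf x y; unfold comparable; rewrite !Hf; reflexivity. Qed.

(** * The orders P_k and their copies in the family *)

Lemma tilde_true_iff dom le u v : tilde dom le u v = true <->
  u = v \/ exists a b, u = 2 * a /\ v = 2 * b /\ dom a = true /\ dom b = true /\ le a b = true.
Proof.
  unfold tilde; rewrite orb_true_iff, Nat.eqb_eq, !andb_true_iff; split.
  - intros [Euv | [[[[Eu Ev] Da] Db] Le]]; [now left | right].
    exists (Nat.div2 u), (Nat.div2 v).
    pose proof (Nat.div2_odd u) as Hu; pose proof (Nat.div2_odd v) as Hv.
    rewrite <- !Nat.negb_even, Eu, Ev in *; simpl in *; repeat split; auto; lia.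
  - intros [Euv | (a & b & -> & -> & Da & Db & Le)]; [now left | right].
    rewrite !Nat.even_even, !Nat.div2_double; auto.
Qed.

Lemma Pgen_spine_rt k j d : (forall i, j <= i < j + d -> Pgen k (2 * i) (2 * i + 2)) ->
  clos_refl_trans nat (Pgen k) (2 * j) (2 * j + 2 * d).
Proof.
  induction d as [|d IH]; intro Hspine.
  - rewrite Nat.add_0_r; apply rt_refl.
  - apply rt_trans with (2 * (j + d)).
    + replace (2 * (j + d)) with (2 * j + 2 * d) by lia; apply IH; intros; apply Hspine; lia.
    + replace (2 * j + 2 * S d) with (2 * (j + d) + 2) by lia; apply rt_step, Hspine; lia.
Qed.

Lemma Pgen0_rt_iff a b : clos_refl_trans nat (Pgen 0) a b <->
  a = b \/ (a mod 2 = 0 /\ ((b mod 2 = 0 /\ a <= b) \/ (b mod 2 = 1 /\ a <= b + 1))).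
Proof.
  split.
  - induction 1 as [x y [(i & -> & ->) | (j & Hj & -> & ->)] | | ]; mod_lia.
  - intros [-> | [Ha Hb]]; [apply rt_refl |].
    assert (Hspine : forall i, Pgen 0 (2 * i) (2 * i + 2)) by (intro i; left; exists i; auto).
    destruct Hb as [[Hb Hab] | [Hb Hab]].
    + replace a with (2 * (a / 2)) by mod_lia.
      replace b with (2 * (a / 2) + 2 * ((b - a) / 2)) by mod_lia.
      apply Pgen_spine_rt; auto.
    + apply rt_trans with (b + 1).
      * replace a with (2 * (a / 2)) by mod_lia.
        replace (b + 1) with (2 * (a / 2) + 2 * ((b + 1 - a) / 2)) by mod_lia.
        apply Pgen_spine_rt; auto.
      * apply rt_step; right; exists ((b + 1) / 2); mod_lia.
Qed.

Lemma Pgen_pos_rt_iff k a b : 0 < k -> clos_refl_trans nat (Pgen k) a b <->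
  a = b \/ (a mod 2 = 0 /\ a <= b /\ b <= 2 * k + 1).
Proof.
  intro Hk; assert (Ek : (k =? 0) = false) by (apply Nat.eqb_neq; lia).
  split.
  - induction 1 as [x y Hxy | | ]; [unfold Pgen in Hxy; rewrite Ek in Hxy | |];
      [destruct Hxy as [(i & Hi & -> & ->) | (i & Hi & -> & ->)] | |]; mod_lia.
  - intros [-> | (Ha & Hab & Hb)]; [apply rt_refl |].
    assert (Hspine : forall i, a / 2 <= i < a / 2 + (b - a) / 2 -> Pgen k (2 * i) (2 * i + 2))
      by (intros i Hi; unfold Pgen; rewrite Ek; left; exists i; mod_lia).
    apply rt_trans with (2 * (a / 2) + 2 * ((b - a) / 2)).
    + replace a with (2 * (a / 2)) at 1 by mod_lia; apply Pgen_spine_rt; auto.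
    + destruct (Nat.eq_dec (b mod 2) 0).
      * replace b with (2 * (a / 2) + 2 * ((b - a) / 2)) at 2 by mod_lia; apply rt_refl.
      * apply rt_step; unfold Pgen; rewrite Ek.
        right; exists (a / 2 + (b - a) / 2); mod_lia.
Qed.

(* The element a of P_k sits at 2a in its copy, so the spine 2i of P_k is at 4i and
   its leaves at 4i + 2; in P_0 the leaf 4i + 2 hangs above the spine point 4i + 4. *)
Lemma Pfam0_true_iff u v : Pfam 0 u v = true <->
  u = v \/ (u mod 4 = 0 /\ ((v mod 4 = 0 /\ u <= v) \/ (v mod 4 = 2 /\ u <= v + 2))).
Proof.
  unfold Pfam, Ple; rewrite tilde_true_iff; split.
  - intros [-> | (a & b & -> & -> & _ & _ & Hab)]; [now left |].
    rewrite pbool_true_iff, Pgen0_rt_iff in Hab; mod_lia.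
  - intros [-> | Huv]; [now left | right].
    exists (u / 2), (v / 2); repeat split; try mod_lia.
    rewrite pbool_true_iff, Pgen0_rt_iff; mod_lia.
Qed.

Lemma Pfam_pos_true_iff k u v : 0 < k -> Pfam k u v = true <->
  u = v \/ (u mod 4 = 0 /\ v mod 2 = 0 /\ u <= v /\ v <= 4 * k + 2).
Proof.
  intro Hk; unfold Pfam, Ple, Pdom.
  replace (k =? 0) with false by (symmetry; apply Nat.eqb_neq; lia).
  rewrite tilde_true_iff; split.
  - intros [-> | (a & b & -> & -> & Da & Db & Hab)]; [now left |].
    rewrite Nat.leb_le in Da, Db; rewrite pbool_true_iff, Pgen_pos_rt_iff in Hab by exact Hk; mod_lia.
  - intros [-> | Huv]; [now left | right].
    exists (u / 2), (v / 2); rewrite !Nat.leb_le, pbool_true_iff, Pgen_pos_rt_iff by exact Hk.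
    repeat split; mod_lia.
Qed.

Lemma Pfam_zero_le k v : v mod 2 = 0 -> k = 0 \/ v <= 4 * k + 2 -> Pfam k 0 v = true.
Proof.
  intros Hv [-> | Hk]; [apply Pfam0_true_iff; mod_lia |].
  destruct (Nat.eq_dec k 0) as [-> | Hk0]; [apply Pfam0_true_iff; mod_lia |].
  apply Pfam_pos_true_iff; mod_lia.
Qed.

Lemma Pfam_pos_comparable k u v : 0 < k -> u <> v -> comparable (Pfam k) u v ->
  u mod 2 = 0 /\ u < 4 * k + 4.
Proof. intros Hk Huv [H | H]; rewrite Pfam_pos_true_iff in H by exact Hk; mod_lia. Qed.

Lemma Pfam_pos_pendant k y : 0 < k -> comparable (Pfam k) 2 y -> y = 0 \/ y = 2.
Proof. intros Hk [H | H]; rewrite Pfam_pos_true_iff in H by exact Hk; mod_lia. Qed.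

Lemma Pfam_comparable_even k u v : u <> v -> comparable (Pfam k) u v -> u mod 2 = 0.
Proof.
  intros Huv [H | H]; apply tilde_true_iff in H as [? | (a & b & -> & -> & _)]; mod_lia.
Qed.

Lemma Pfam0_two_partners u : u mod 2 = 0 ->
  exists w w', w <= 4 /\ w' <= 4 /\ w <> w' /\ w <> u /\ w' <> u /\
    comparable (Pfam 0) u w /\ comparable (Pfam 0) u w'.
Proof.
  intro Hu; destruct (Nat.eq_dec u 0) as [-> | H0]; [exists 2, 4 |].
  2: destruct (Nat.eq_dec u 4) as [-> | H4]; [exists 0, 2 | exists 0, 4].
  all: unfold comparable; rewrite !Pfam0_true_iff; mod_lia.
Qed.

(** * Counting non-isolated points of finite substructures *)

Lemma le_list_max_map (g : nat -> nat) L c : In c L -> g c <= list_max (map g L).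
Proof.
  intro Hc; pose proof (proj1 (list_max_le (map g L) _) (le_n _)) as H.
  rewrite Forall_forall in H; apply H, in_map, Hc.
Qed.

Lemma count_filter_le (p : nat -> bool) n (f : nat -> nat) L : Injective f ->
  (forall x, x <= n -> p x = true -> In (f x) L) -> length (filter p (seq 0 (S n))) <= length L.
Proof.
  intros Hf HL; rewrite <- (length_map f); apply NoDup_incl_length.
  - apply Injective_map_NoDup, NoDup_filter, seq_NoDup; exact Hf.
  - intros y (x & <- & Hx)%in_map_iff; apply filter_In in Hx as [Hx Hp].
    apply in_seq in Hx; apply HL; auto; lia.
Qed.

Lemma count_filter_ge (p : nat -> bool) n (g : nat -> nat) L : Injective g -> NoDup L ->
  (forall c, In c L -> g c <= n /\ p (g c) = true) -> length L <= length (filter p (seq 0 (S n))).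
Proof.
  intros Hg HL Hp; rewrite <- (length_map g L); apply NoDup_incl_length.
  - apply Injective_map_NoDup; assumption.
  - intros x (c & <- & Hc)%in_map_iff; destruct (Hp c Hc).
    apply filter_In; split; [apply in_seq; lia | assumption].
Qed.

Lemma left_inverse_injective (f g : nat -> nat) : (forall x, g (f x) = x) -> Injective f.
Proof. intros gf x y E; rewrite <- (gf x), E, gf; reflexivity. Qed.

Definition nonisolated n (A : structure) x : bool :=
  pbool (exists y, y <= n /\ y <> x /\ comparable A x y).

Definition count_nonisolated n (A : structure) : nat :=
  length (filter (nonisolated n A) (seq 0 (S n))).

Lemma count_nonisolated_agree n A B : agree_upto n A B ->
  count_nonisolated n A = count_nonisolated n B.
Proof.
  intro Hn; unfold count_nonisolated; f_equal; apply filter_ext_in.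
  intros x Hx%in_seq; apply pbool_ext.
  split; intros (y & Hy & Hyx & Hc); exists y; repeat split; auto;
    [rewrite <- (comparable_agree n A B) | rewrite (comparable_agree n A B)]; auto; lia.
Qed.

Lemma count_nonisolated_le_iso A B L : iso A B ->
  (forall u v, u <> v -> comparable B u v -> In u L) -> forall n, count_nonisolated n A <= length L.
Proof.
  intros (f & g & gf & fg & Hf) HL n.
  apply (count_filter_le _ n f); [exact (left_inverse_injective f g gf) |].
  intros x _ (y & _ & Hyx & Hc)%pbool_true_iff.
  apply (HL _ (f y)); [intro E; apply Hyx, (left_inverse_injective f g gf); auto |].
  apply (comparable_iso A B f); assumption.
Qed.

Lemma count_nonisolated_ge_iso A B L : iso A B -> NoDup L ->
  (forall u, In u L -> exists v, In v L /\ v <> u /\ comparable B u v) ->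
  exists N, forall n, N <= n -> length L <= count_nonisolated n A.
Proof.
  intros (f & g & gf & fg & Hf) HL Hpartner; exists (list_max (map g L)); intros n Hn.
  assert (Hg : Injective g) by exact (left_inverse_injective g f fg).
  apply (count_filter_ge _ n g); [exact Hg | exact HL |].
  intros c Hc; pose proof (le_list_max_map g L c Hc); split; [lia |].
  apply pbool_true_iff; destruct (Hpartner c Hc) as (v & Hv & Hvc & Hcv).
  pose proof (le_list_max_map g L v Hv).
  exists (g v); repeat split; [lia | intro E; apply Hvc, Hg; auto |].
  apply (comparable_iso A B f); [exact Hf | rewrite !fg; exact Hcv].
Qed.

Definition evens m : list nat := map (fun a => 2 * a) (seq 0 m).

Lemma in_evens m u : In u (evens m) <-> u mod 2 = 0 /\ u < 2 * m.
Proof.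
  unfold evens; rewrite in_map_iff; split.
  - intros (a & <- & Ha%in_seq); mod_lia.
  - intro Hu; exists (u / 2); rewrite in_seq; mod_lia.
Qed.

Lemma evens_NoDup m : NoDup (evens m).
Proof. apply Injective_map_NoDup; [intros x y; lia | apply seq_NoDup]. Qed.

Lemma length_evens m : length (evens m) = m.
Proof. unfold evens; rewrite length_map, length_seq; reflexivity. Qed.

Lemma Pfam_evens_partner k m u : 2 <= m -> k = 0 \/ m <= 2 * k + 2 -> In u (evens m) ->
  exists v, In v (evens m) /\ v <> u /\ comparable (Pfam k) u v.
Proof.
  intros Hm Hkm Hu%in_evens; destruct (Nat.eq_dec u 0) as [-> | Hu0].
  - exists 2; rewrite in_evens; repeat split; try mod_lia.
    left; apply Pfam_zero_le; mod_lia.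
  - exists 0; rewrite in_evens; repeat split; try mod_lia.
    right; apply Pfam_zero_le; mod_lia.
Qed.

Lemma count_nonisolated_Pfam_pos k A : 0 < k -> iso A (Pfam k) ->
  (forall n, count_nonisolated n A <= 2 * k + 2) /\
  exists N, forall n, N <= n -> count_nonisolated n A = 2 * k + 2.
Proof.
  intros Hk HA; rewrite <- (length_evens (2 * k + 2)).
  assert (Hle : forall n, count_nonisolated n A <= length (evens (2 * k + 2))).
  { apply (count_nonisolated_le_iso A (Pfam k)); [exact HA |].
    intros u v Huv Hc; apply in_evens; pose proof (Pfam_pos_comparable k u v Hk Huv Hc); lia. }
  split; [exact Hle |].
  destruct (count_nonisolated_ge_iso A (Pfam k) (evens (2 * k + 2))) as [N HN].
  - exact HA.
  - apply evens_NoDup.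
  - intros u; apply Pfam_evens_partner; lia.
  - exists N; intros n Hn; specialize (HN n Hn); specialize (Hle n); lia.
Qed.

Lemma count_nonisolated_Pfam0 A : iso A (Pfam 0) ->
  forall M, exists N, forall n, N <= n -> M <= count_nonisolated n A.
Proof.
  intros HA M; destruct (count_nonisolated_ge_iso A (Pfam 0) (evens (M + 2))) as [N HN].
  - exact HA.
  - apply evens_NoDup.
  - intros u; apply Pfam_evens_partner; lia.
  - exists N; intros n Hn; specialize (HN n Hn); rewrite length_evens in HN; lia.
Qed.

Definition has_pendant n (A : structure) : bool :=
  pbool (exists t b, t <= n /\ b <= n /\ b <> t /\ comparable A t b /\
    forall y, y <= n -> y <> t -> comparable A t y -> y = b).

Lemma has_pendant_agree n A B : agree_upto n A B -> has_pendant n A = has_pendant n B.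
Proof.
  intro Hn; apply pbool_ext.
  split; intros (t & b & Ht & Hb & Hbt & Htb & Huniq); exists t, b; repeat split; auto.
  - rewrite <- (comparable_agree n A B); auto.
  - intros y Hy Hyt Hc; apply Huniq; auto; rewrite (comparable_agree n A B); auto.
  - rewrite (comparable_agree n A B); auto.
  - intros y Hy Hyt Hc; apply Huniq; auto; rewrite <- (comparable_agree n A B); auto.
Qed.

(* The leaf 1 of P_k (k > 0) is comparable only to the root 0. *)
Lemma has_pendant_Pfam_pos k A : 0 < k -> iso A (Pfam k) ->
  exists N, forall n, N <= n -> has_pendant n A = true.
Proof.
  intros Hk (f & g & gf & fg & Hf); exists (max (g 0) (g 2)); intros n Hn.
  apply pbool_true_iff; exists (g 2), (g 0); repeat split; try lia.
  - intro E; apply (f_equal f) in E; rewrite !fg in E; discriminate.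
  - apply (comparable_iso A (Pfam k) f); [exact Hf |]; rewrite !fg.
    right; apply Pfam_zero_le; mod_lia.
  - intros y _ Hyt Hc; rewrite (comparable_iso A (Pfam k) f Hf), fg in Hc.
    destruct (Pfam_pos_pendant k (f y) Hk Hc) as [E | E];
      [rewrite <- E, gf; reflexivity | rewrite <- E, gf in Hyt; contradiction].
Qed.

(* In P_0 every non-isolated point is comparable to two of 0, 1, 2 (at 0, 2, 4 in the copy). *)
Lemma has_pendant_Pfam0 A : iso A (Pfam 0) ->
  exists N, forall n, N <= n -> has_pendant n A = false.
Proof.
  intros (f & g & gf & fg & Hf); exists (list_max (map g (seq 0 5))); intros n Hn.
  apply not_true_iff_false; intros (t & b & Ht & Hb & Hbt & Htb & Huniq)%pbool_true_iff.
  rewrite (comparable_iso A (Pfam 0) f Hf) in Htb.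
  assert (Hfbt : f t <> f b) by (intro E; apply Hbt, (left_inverse_injective f g gf); auto).
  destruct (Pfam0_two_partners (f t) (Pfam_comparable_even 0 _ _ Hfbt Htb))
    as (w & w' & Hw & Hw' & Hww' & Hwt & Hw't & Hc & Hc').
  assert (Hpartner : forall v, v <= 4 -> v <> f t -> comparable (Pfam 0) (f t) v -> g v = b).
  { intros v Hv Hvt Hcv; pose proof (le_list_max_map g (seq 0 5) v ltac:(apply in_seq; lia)).
    apply Huniq; [lia | intro E; apply Hvt; rewrite <- E, fg; reflexivity |].
    rewrite (comparable_iso A (Pfam 0) f Hf), fg; exact Hcv. }
  apply Hww', (left_inverse_injective g f fg).
  rewrite (Hpartner w), (Hpartner w'); auto.
Qed.

(** * Learning up to E_0 and E_range *)

Definition local (Gamma : structure -> nat -> nat) : Prop :=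
  forall j S S', agree_upto j S S' -> Gamma S j = Gamma S' j.

Lemma local_continuous fam Gamma : local Gamma -> continuous_on_LD fam Gamma.
Proof.
  intros Hloc S _ n; exists n; intros S' _ Hn j Hj.
  symmetry; apply Hloc, (agree_upto_le n); assumption.
Qed.

Lemma E_learnable_of_codes (E : relation (nat -> nat)) fam Gamma (code : nat -> nat -> nat) :
  equivalence _ E -> local Gamma ->
  (forall S i, iso S (fam i) -> E (Gamma S) (code i)) ->
  (forall i j, E (code i) (code j) -> i = j) -> E_learnable E fam.
Proof.
  intros [_ Etrans Esym] Hloc Hcode Hinj; exists Gamma; split; [apply local_continuous, Hloc |].
  intros S S' [i Hi] [j Hj]; split.
  - intro HSS'; apply (Etrans _ (code i)); [apply Hcode, Hi |].
    apply Esym, Hcode, (iso_trans _ S); [apply iso_sym |]; assumption.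
  - intro HE; enough (i = j) as <- by (apply (iso_trans _ (fam i)); [| apply iso_sym]; assumption).
    apply Hinj, (Etrans _ (Gamma S)); [apply Esym, Hcode, Hi |].
    apply (Etrans _ (Gamma S')); [exact HE | apply Hcode, Hj].
Qed.

Lemma E0_equivalence : equivalence _ E0.
Proof.
  split.
  - intro p; exists 0; reflexivity.
  - intros p q r [m Hm] [m' Hm']; exists (max m m'); intros n Hn.
    rewrite Hm, Hm'; [reflexivity | lia | lia].
  - intros p q [m Hm]; exists m; intros n Hn; symmetry; apply Hm, Hn.
Qed.

Lemma Erange_equivalence : equivalence _ Erange.
Proof.
  split.
  - intros p a; reflexivity.
  - intros p q r Hpq Hqr a; rewrite (Hpq a); apply Hqr.
  - intros p q Hpq a; symmetry; apply Hpq.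
Qed.

Definition E0_learner (A : structure) (n : nat) : nat :=
  if has_pendant n A then S (count_nonisolated n A) else 0.

Definition E0_code (i : nat) : nat := if i =? 0 then 0 else 2 * i + 3.

Lemma E0_learner_local : local E0_learner.
Proof.
  intros j A B Hj; unfold E0_learner.
  rewrite (has_pendant_agree j A B), (count_nonisolated_agree j A B); auto.
Qed.

Lemma E0_learner_limit A i : iso A (Pfam i) -> E0 (E0_learner A) (fun _ => E0_code i).
Proof.
  intro HA; unfold E0_learner, E0_code; destruct (Nat.eqb_spec i 0) as [-> | Hi].
  - destruct (has_pendant_Pfam0 A HA) as [N HN]; exists N; intros n Hn; rewrite HN; auto.
  - destruct (has_pendant_Pfam_pos i A ltac:(lia) HA) as [N HN].
    destruct (count_nonisolated_Pfam_pos i A ltac:(lia) HA) as [_ [N' HN']].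
    exists (max N N'); intros n Hn; rewrite HN, HN' by lia; lia.
Qed.

Lemma E0_learnable_Pfam : E_learnable E0 Pfam.
Proof.
  apply (E_learnable_of_codes E0 Pfam E0_learner (fun i _ => E0_code i)).
  - exact E0_equivalence.
  - exact E0_learner_local.
  - exact E0_learner_limit.
  - intros i j [m Hm]; specialize (Hm m (le_n m)); unfold E0_code in Hm.
    destruct (Nat.eqb_spec i 0), (Nat.eqb_spec j 0); lia.
Qed.

(* Approaches the count of non-isolated points by steps of at most one, so that its
   range is an initial segment of N. *)
Fixpoint Erange_learner (A : structure) (n : nat) : nat :=
  match n with
  | 0 => 0
  | S p => min (count_nonisolated (S p) A) (S (Erange_learner A p))
  end.

Lemma Erange_learner_local : local Erange_learner.
Proof.
  intros j A B Hj; induction j as [|j IH]; [reflexivity |]; simpl.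
  rewrite (count_nonisolated_agree (S j) A B Hj), IH; [reflexivity |].
  apply (agree_upto_le (S j)); auto.
Qed.

Lemma Erange_learner_le A n : Erange_learner A n <= count_nonisolated n A.
Proof. destruct n; simpl; lia. Qed.

Lemma Erange_learner_down_closed A m a : a <= Erange_learner A m ->
  exists n, Erange_learner A n = a.
Proof.
  induction m as [|m IH]; intro Ha; [exists 0; simpl in *; lia |].
  destruct (Nat.le_gt_cases a (Erange_learner A m)) as [Hle | Hgt]; [auto |].
  exists (S m); simpl in *; lia.
Qed.

Lemma Erange_learner_reach A N L : (forall n, N <= n -> L <= count_nonisolated n A) ->
  forall j, min L j <= Erange_learner A (N + j).
Proof.
  intros HL j; induction j as [|j IH]; [lia |].
  rewrite Nat.add_succ_r; simpl; specialize (HL (S (N + j)) ltac:(lia)); lia.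
Qed.

Definition Erange_code (i m : nat) : nat := if i =? 0 then m else min m (2 * i + 2).

Lemma Erange_code_range i a : (exists m, Erange_code i m = a) <-> i = 0 \/ a <= 2 * i + 2.
Proof.
  unfold Erange_code; destruct (Nat.eqb_spec i 0); split.
  - auto.
  - intros _; exists a; reflexivity.
  - intros [m <-]; lia.
  - intros [| Ha]; [contradiction | exists a; lia].
Qed.

Lemma Erange_learner_range A i : iso A (Pfam i) ->
  forall a, (exists m, Erange_learner A m = a) <-> i = 0 \/ a <= 2 * i + 2.
Proof.
  intros HA a; destruct (Nat.eq_dec i 0) as [-> | Hi].
  - split; [auto | intros _].
    destruct (count_nonisolated_Pfam0 A HA a) as [N HN].
    apply (Erange_learner_down_closed A (N + a)).
    pose proof (Erange_learner_reach A N a HN a); lia.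
  - destruct (count_nonisolated_Pfam_pos i A ltac:(lia) HA) as [Hle [N HN]]; split.
    + intros [m <-]; right; pose proof (Erange_learner_le A m); specialize (Hle m); lia.
    + intros [| Ha]; [contradiction |].
      assert (HN' : forall n, N <= n -> 2 * i + 2 <= count_nonisolated n A)
        by (intros n Hn; rewrite HN; auto).
      apply (Erange_learner_down_closed A (N + (2 * i + 2))).
      pose proof (Erange_learner_reach A N _ HN' (2 * i + 2)); lia.
Qed.

Lemma Erange_learnable_Pfam : E_learnable Erange Pfam.
Proof.
  apply (E_learnable_of_codes Erange Pfam Erange_learner Erange_code).
  - exact Erange_equivalence.
  - exact Erange_learner_local.
  - intros S i HS a; rewrite (Erange_learner_range S i HS), Erange_code_range; reflexivity.
  - intros i j Hij.
    assert (Hr : forall a, i = 0 \/ a <= 2 * i + 2 <-> j = 0 \/ a <= 2 * j + 2)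
      by (intro a; rewrite <- !Erange_code_range; apply Hij).
    pose proof (Hr (2 * i + 2)); pose proof (Hr (2 * j + 2)); pose proof (Hr (2 * i + 2 * j + 3)).
    lia.
Qed.

(** * Failure of non-U-shaped learning *)

(* Locking argument: a learner that has settled on [fam i0] along [fam i0] must switch to k
   on a copy of [fam k] extending that segment, and back to i0 on a copy of [fam i0]
   extending the new one, thus abandoning i0 in between. *)
Lemma not_nUs_learnable_of_alternation fam i0 :
  (forall n, exists k A, k <> i0 /\ iso A (fam k) /\ agree_upto n (fam i0) A) ->
  (forall k A n, k <> i0 -> iso A (fam k) -> exists B, iso B (fam i0) /\ agree_upto n A B) ->
  ~ nUs_learnable fam.
Proof.
  intros Hleave Hreturn (M & HM & Hlearn).
  destruct (Hlearn (fam i0) i0 (ex_intro _ i0 (iso_refl _)) (iso_refl _)) as [[n0 Hn0] _].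
  destruct (Hleave n0) as (k & A & Hk & HA & Hn0A).
  destruct (Hlearn A k (ex_intro _ k HA) HA) as [[n1 Hn1] _].
  destruct (Hreturn k A (max n0 n1) Hk HA) as (B & HB & HAB).
  destruct (Hlearn B i0 (ex_intro _ i0 HB) HB) as [_ Hlock].
  assert (HBn0 : M n0 B = Some i0).
  { rewrite <- (HM n0 A B), <- (HM n0 _ _ Hn0A); [apply Hn0; lia |].
    apply (agree_upto_le (max n0 n1)); [lia | exact HAB]. }
  specialize (Hlock n0 HBn0 (max n0 n1) ltac:(lia)).
  rewrite <- (HM _ A B HAB), Hn1 in Hlock by lia.
  injection Hlock; exact Hk.
Qed.

Definition swap (a c x : nat) : nat := if x =? a then c else if x =? c then a else x.

Lemma swap_involutive a c x : swap a c (swap a c x) = x.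
Proof.
  unfold swap; destruct (Nat.eqb_spec x a), (Nat.eqb_spec x c);
    repeat match goal with |- context [?x =? ?y] => destruct (Nat.eqb_spec x y) end; lia.
Qed.

Lemma injective_upto_extends_bijective W (h : nat -> nat) :
  (forall x y, x < W -> y < W -> h x = h y -> x = y) ->
  exists r r' : nat -> nat, (forall x, r' (r x) = x) /\ (forall y, r (r' y) = y) /\
    forall x, x < W -> r x = h x.
Proof.
  induction W as [|W IH]; intro Hinj.
  - exists (fun x => x), (fun x => x); repeat split; intros; lia.
  - destruct IH as (r & r' & rr' & r'r & Hr); [intros; apply Hinj; auto; lia |].
    exists (fun x => swap (r W) (h W) (r x)), (fun y => r' (swap (r W) (h W) y)).
    repeat split.
    + intro x; rewrite swap_involutive; auto.
    + intro y; rewrite r'r, swap_involutive; reflexivity.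
    + intros x Hx; unfold swap; destruct (Nat.eq_dec x W) as [-> | Hne]; [now rewrite Nat.eqb_refl |].
      rewrite Hr by lia.
      destruct (Nat.eqb_spec (h x) (r W)) as [E | E].
      { rewrite <- Hr in E by lia; apply (f_equal r') in E; rewrite !rr' in E; lia. }
      destruct (Nat.eqb_spec (h x) (h W)) as [E' | E']; [apply Hinj in E'; lia | reflexivity].
Qed.

Definition embeds_upto N (A B : structure) : Prop :=
  exists h : nat -> nat, (forall u v, u <= N -> v <= N -> h u = h v -> u = v) /\
    forall u v, u <= N -> v <= N -> B (h u) (h v) = A u v.

(* Extend a finite embedding of [B] into [B'] to a bijection of N and pull [B'] back. *)
Lemma iso_copy_agree A B n : iso A B ->
  exists N, forall B', embeds_upto N B B' -> exists A', iso A' B' /\ agree_upto n A A'.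
Proof.
  intros (f & g & gf & fg & Hf); exists (list_max (map f (seq 0 (S n)))).
  intros B' (h & Hinj & Hpres).
  destruct (injective_upto_extends_bijective (S (list_max (map f (seq 0 (S n))))) h)
    as (r & r' & rr' & r'r & Hr); [intros; apply Hinj; auto; lia |].
  exists (fun x y => B' (r (f x)) (r (f y))); split.
  - exists (fun x => r (f x)), (fun y => g (r' y)); repeat split.
    + intro x; rewrite rr', gf; reflexivity.
    + intro y; rewrite fg, r'r; reflexivity.
  - intros x y Hx Hy.
    pose proof (le_list_max_map f (seq 0 (S n)) x ltac:(apply in_seq; lia)).
    pose proof (le_list_max_map f (seq 0 (S n)) y ltac:(apply in_seq; lia)).
    rewrite Hf, !Hr, Hpres by lia; reflexivity.
Qed.

(* Moving each leaf 4i + 2 of P_0 to 4i + 6 puts it above the same spine points of P_k. *)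
Lemma Pfam0_embeds_upto N : embeds_upto N (Pfam 0) (Pfam (N + 1)).
Proof.
  exists (fun u => if u mod 4 =? 2 then u + 4 else u); split.
  - intros u v Hu Hv; destruct (Nat.eqb_spec (u mod 4) 2), (Nat.eqb_spec (v mod 4) 2); mod_lia.
  - intros u v Hu Hv; apply eq_true_iff_eq; rewrite Pfam0_true_iff, Pfam_pos_true_iff by lia.
    destruct (Nat.eqb_spec (u mod 4) 2), (Nat.eqb_spec (v mod 4) 2); mod_lia.
Qed.

(* Shift the spine of P_k up by one step, keep its leaves, and send the remaining points to
   odd numbers, which are new points of the copy of P_0. *)
Lemma Pfam_pos_embeds_upto k N : 0 < k -> embeds_upto N (Pfam k) (Pfam 0).
Proof.
  intro Hk.
  exists (fun u => if (u mod 2 =? 0) && (u <=? 4 * k + 2)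
           then (if u mod 4 =? 0 then u + 4 else u) else 2 * u + 1).
  split; intros u v Hu Hv;
    [| apply eq_true_iff_eq; rewrite Pfam0_true_iff, (Pfam_pos_true_iff k u v) by lia];
    destruct (Nat.eqb_spec (u mod 2) 0), (Nat.leb_spec u (4 * k + 2)), (Nat.eqb_spec (u mod 4) 0);
    destruct (Nat.eqb_spec (v mod 2) 0), (Nat.leb_spec v (4 * k + 2)), (Nat.eqb_spec (v mod 4) 0);
    cbn [andb]; mod_lia.
Qed.

Lemma not_nUs_learnable_Pfam : ~ nUs_learnable Pfam.
Proof.
  apply (not_nUs_learnable_of_alternation Pfam 0).
  - intro n; destruct (iso_copy_agree (Pfam 0) (Pfam 0) n (iso_refl _)) as [N HN].
    destruct (HN (Pfam (N + 1)) (Pfam0_embeds_upto N)) as (A & HA & Hn).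
    exists (N + 1), A; repeat split; [lia | assumption | assumption].
  - intros k A n Hk HA; destruct (iso_copy_agree A (Pfam k) n HA) as [N HN].
    apply HN, Pfam_pos_embeds_upto; lia.
Qed.

Theorem mainTheorem13 :
  E_learnable E0 Pfam /\ E_learnable Erange Pfam /\ ~ nUs_learnable Pfam.
Proof.
  split; [exact E0_learnable_Pfam |].
  split; [exact Erange_learnable_Pfam | exact not_nUs_learnable_Pfam].
Qed.
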